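(* Let $A\succeq0$ be an $m\times m$ diagonal matrix and $M\succ0$ an $m\times m$ matrix, and let $M_{diag}$ denote the diagonal matrix with the same diagonal as $M$. Then $[(M_{diag})^{-1}+A]^{-1}\succeq\big([M^{-1}+A]^{-1}\big)_{diag}$.
   Context: For a square matrix $E$, $(E)_{diag}$ is the diagonal matrix whose diagonal entries equal those of $E$. $P\succeq Q$ means $P-Q$ is positive semidefinite; $M\succ0$ means positive definite. *)

From mathcomp Require Import all_boot all_order all_algebra.
Set Implicit Arguments. Unset Strict Implicit. Unset Printing Implicit Defensive.
Import Order.TTheory GRing.Theory Num.Theory.
Local Open Scope ring_scope.

Definition psdmx (R : realFieldType) (m : nat) (P : 'M[R]_m) : Prop :=
  P^T = P /\ forall x : 'cV[R]_m, 0 <= (x^T *m P *m x) 0 0.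

Definition pdmx (R : realFieldType) (m : nat) (P : 'M[R]_m) : Prop :=
  P^T = P /\ forall x : 'cV[R]_m, x != 0 -> 0 < (x^T *m P *m x) 0 0.

Definition loewner_ge (R : realFieldType) (m : nat) (P Q : 'M[R]_m) : Prop :=
  psdmx (P - Q).

Definition diagpart (R : realFieldType) (m : nat) (E : 'M[R]_m) : 'M[R]_m :=
  diag_mx (\row_i E i i).

From mathcomp Require Import all_boot all_order all_algebra.
From mathcomp Require Import ring lra.
Import Order.TTheory GRing.Theory Num.Theory.
Local Open Scope ring_scope.

(* Both sides are diagonal, so it suffices to compare diagonal entries.  Put
   N = M^-1 + A, P = N^-1, p = P_kk and z = P e_k.  Then p = z^T N z
   = z^T M^-1 z + z^T A z.  Cauchy-Schwarz for the inner product of M, applied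
   to e_k and M^-1 z, gives z^T M^-1 z >= z_k^2 / M_kk = p^2 / M_kk, while
   z^T A z >= A_kk z_k^2 = A_kk p^2.  Hence p >= p^2 (1/M_kk + A_kk), which is
   p <= (1/M_kk + A_kk)^-1. *)

Section QuadraticForms.
Set Implicit Arguments.
Context {R : realFieldType} {m : nat}.
Implicit Types (P Q : 'M[R]_m) (u v x : 'cV[R]_m) (d : 'rV[R]_m).

Definition bform P u v := (u^T *m P *m v) 0 0.

Lemma bformDl P u1 u2 v : bform P (u1 + u2) v = bform P u1 v + bform P u2 v.
Proof. by rewrite /bform linearD /= !mulmxDl mxE. Qed.

Lemma bformDr P u v1 v2 : bform P u (v1 + v2) = bform P u v1 + bform P u v2.
Proof. by rewrite /bform !mulmxDr mxE. Qed.

Lemma bformZl P a u v : bform P (a *: u) v = a * bform P u v.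
Proof. by rewrite /bform linearZ /= -!scalemxAl mxE. Qed.

Lemma bformZr P a u v : bform P u (a *: v) = a * bform P u v.
Proof. by rewrite /bform -scalemxAr mxE. Qed.

Lemma bformD P Q u v : bform (P + Q) u v = bform P u v + bform Q u v.
Proof. by rewrite /bform mulmxDr mulmxDl mxE. Qed.

Lemma bformC P u v : P^T = P -> bform P u v = bform P v u.
Proof.
move=> symP; rewrite /bform -[in LHS](trmxK (u^T *m P *m v)) [in LHS]mxE.
by rewrite !trmx_mul trmxK symP mulmxA.
Qed.

Lemma bform_delta_l P i v : bform P (delta_mx i 0) v = (P *m v) i 0.
Proof. by rewrite /bform trmx_delta -mulmxA -rowE !mxE. Qed.

Lemma bform_delta P i : bform P (delta_mx i 0) (delta_mx i 0) = P i i.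
Proof. by rewrite bform_delta_l -colE mxE. Qed.

Lemma bform_diag d x : bform (diag_mx d) x x = \sum_k d 0 k * x k 0 ^+ 2.
Proof.
rewrite /bform mul_mx_diag mxE; apply: eq_bigr => k _.
by rewrite !mxE; ring.
Qed.

Lemma bform_invmx P x : P^T = P -> P \in unitmx ->
  bform (invmx P) (P *m x) (P *m x) = bform P x x.
Proof. by move=> symP unitP; rewrite /bform trmx_mul symP mulmxK // mulmxA. Qed.

Lemma delta_cV_neq0 (i : 'I_m) : delta_mx i 0 != 0 :> 'cV[R]_m.
Proof.
apply/eqP => /matrixP /(_ i 0); rewrite !mxE !eqxx /= => /eqP.
by rewrite oner_eq0.
Qed.

Lemma psdmx_cauchy_schwarz P u v : psdmx P -> 0 < bform P u u ->
  bform P u v ^+ 2 <= bform P u u * bform P v v.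
Proof.
move=> [symP psdP] uu_gt0.
have := psdP (bform P u v *: u - bform P u u *: v).
rewrite -/(bform _ _ _) bformDl !bformDr -!scaleNr !bformZl !bformZr.
by rewrite (bformC v u symP); nra.
Qed.

Lemma pdmx_psd P : pdmx P -> psdmx P.
Proof.
move=> [symP pdP]; split=> // x; have [->|x_neq0] := eqVneq x 0.
  by rewrite mulmx0 mxE.
exact/ltW/pdP.
Qed.

Lemma pdmx_diag_gt0 P i : pdmx P -> 0 < P i i.
Proof. by move=> [_ pdP]; rewrite -bform_delta; apply/pdP/delta_cV_neq0. Qed.

Lemma psdmx_diag_ge0 P i : psdmx P -> 0 <= P i i.
Proof. by move=> [_ psdP]; rewrite -bform_delta; apply: psdP. Qed.

Lemma pdmx_unit P : pdmx P -> P \in unitmx.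
Proof.
move=> [symP pdP]; rewrite -row_free_unit -kermx_eq0.
apply: contraT => kerP_neq0.
set u := nz_row (kermx P).
have uP0 : u *m P = 0 by apply/sub_kermxP/nz_row_sub.
have := pdP u^T; rewrite trmx_eq0 nz_row_eq0 kerP_neq0 trmxK uP0 mul0mx mxE.
by rewrite ltxx => /(_ isT).
Qed.

Lemma pdmx_inv P : pdmx P -> pdmx (invmx P).
Proof.
move=> pdP; have [symP posP] := pdP; have unitP := pdmx_unit pdP.
split=> [|x x_neq0]; first by rewrite trmx_inv symP.
rewrite -/(bform _ _ _) -(mulKVmx unitP x) bform_invmx //; apply: posP.
by apply: contra x_neq0 => /eqP y0; rewrite -(mulKVmx unitP x) y0 mulmx0.
Qed.

Lemma pdmx_add_psd P Q : pdmx P -> psdmx Q -> pdmx (P + Q).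
Proof.
move=> [symP pdP] [symQ psdQ]; split=> [|x x_neq0].
  by rewrite linearD /= symP symQ.
by rewrite -/(bform _ _ _) bformD; apply: ltr_wpDr; [apply: psdQ | apply: pdP].
Qed.

Lemma psdmx_diag d : (forall k, 0 <= d 0 k) -> psdmx (diag_mx d).
Proof.
move=> d_ge0; split=> [|x]; first exact: tr_diag_mx.
rewrite -/(bform _ _ _) bform_diag; apply: sumr_ge0 => k _.
by rewrite mulr_ge0 ?sqr_ge0.
Qed.

Lemma invmx_diag d : (forall k, d 0 k != 0) ->
  invmx (diag_mx d) = diag_mx (\row_k (d 0 k)^-1).
Proof.
move=> d_neq0.
have dV : diag_mx d *m diag_mx (\row_k (d 0 k)^-1) = 1%:M.
  rewrite mulmx_diag; apply/matrixP => i j; rewrite !mxE.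
  by case: (eqVneq i j) => [->|_]; rewrite ?mulfV ?mulr0n ?mulr1n.
have [unit_d _] := mulmx1_unit dV.
by rewrite -[RHS](mulKmx unit_d) dV mulmx1.
Qed.

Lemma pdmx_sqr_entry_le P x k : pdmx P ->
  x k 0 ^+ 2 <= P k k * bform (invmx P) x x.
Proof.
move=> pdP; have unitP := pdmx_unit pdP.
rewrite -(mulKVmx unitP x) bform_invmx ?(proj1 pdP) //.
rewrite -bform_delta_l -bform_delta; apply: psdmx_cauchy_schwarz.
  exact: pdmx_psd.
by rewrite bform_delta pdmx_diag_gt0.
Qed.

Lemma bform_diag_ge d x k : (forall j, 0 <= d 0 j) ->
  d 0 k * x k 0 ^+ 2 <= bform (diag_mx d) x x.
Proof.
move=> d_ge0; rewrite bform_diag (bigD1 k) //= lerDl.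
by apply: sumr_ge0 => j _; rewrite mulr_ge0 ?sqr_ge0.
Qed.

End QuadraticForms.

Lemma invmx_inv_add_diag_entry_le (R : realFieldType) (m : nat)
    (M : 'M[R]_m) (a : 'rV[R]_m) k :
  pdmx M -> (forall j, 0 <= a 0 j) ->
  invmx (invmx M + diag_mx a) k k <= ((M k k)^-1 + a 0 k)^-1.
Proof.
move=> pdM a_ge0.
set N := invmx M + diag_mx a.
have pdN : pdmx N by apply: pdmx_add_psd; [exact: pdmx_inv | exact: psdmx_diag].
set P := invmx N; set z : 'cV[R]_m := P *m delta_mx k 0; set p := P k k.
have pdP : pdmx P := pdmx_inv pdN.
have zk : z k 0 = p by rewrite /z -colE mxE.
have Nzz : bform N z z = p.
  by rewrite -[N]invmxK bform_invmx ?bform_delta ?(proj1 pdP) ?pdmx_unit.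
have p_gt0 : 0 < p := pdmx_diag_gt0 k pdP.
have Mk_gt0 : 0 < M k k := pdmx_diag_gt0 k pdM.
have sq_le_Minv := pdmx_sqr_entry_le z k pdM; rewrite zk in sq_le_Minv.
have sq_le_a := bform_diag_ge a z k a_ge0; rewrite zk in sq_le_a.
have p_split : p = bform (invmx M) z z + bform (diag_mx a) z z.
  by rewrite -Nzz bformD.
have w_gt0 : 0 < (M k k)^-1 by rewrite invr_gt0.
have sq_w_le : p ^+ 2 * (M k k)^-1 <= bform (invmx M) z z.
  by rewrite ler_pdivrMr // mulrC.
have : p * (p * ((M k k)^-1 + a 0 k)) <= p * 1 by nra.
rewrite ler_pM2l // => p_le1.
by rewrite -[leRHS]mul1r ler_pdivlMr ?ltr_wpDr.
Qed.

Theorem lemma3 (R : realFieldType) (m : nat) (A M : 'M[R]_m) :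
  is_diag_mx A -> psdmx A -> pdmx M ->
  loewner_ge (invmx (invmx (diagpart M) + A)) (diagpart (invmx (invmx M + A))).
Proof.
move=> /diag_mxP [a ->] psdA pdM.
have a_ge0 k : 0 <= a 0 k.
  by have := psdmx_diag_ge0 k psdA; rewrite !mxE eqxx mulr1n.
have Mk_gt0 k : 0 < M k k := pdmx_diag_gt0 k pdM.
have -> : invmx (diagpart M) + diag_mx a
          = diag_mx (\row_k ((M k k)^-1 + a 0 k)).
  rewrite /diagpart invmx_diag => [|k]; last by rewrite mxE gt_eqF.
  by rewrite -linearD /=; congr diag_mx; apply/rowP => k; rewrite !mxE.
rewrite invmx_diag => [|k]; last by rewrite mxE gt_eqF ?ltr_wpDr ?invr_gt0.
rewrite /loewner_ge /diagpart -linearB /=; apply: psdmx_diag => k.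
by rewrite !mxE subr_ge0 invmx_inv_add_diag_entry_le.
Qed.
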